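(* Let $S$ be a category and $x,y\in S$. Then $\varepsilon_S(x)=\varepsilon_S(y)$ in $\mathrm{U_{mon}}(S)$ if and only if either $x=y$ or both $x$ and $y$ are identities of $S$. In particular, the restriction of $\varepsilon_S$ to every hom-set $S(a,b)$ is one-to-one.
   Context: Categories are arrow-only: a set $S$ with partial associative multiplication, identities $\mathrm{Id}\,S$, source/target identities $\mathrm{s}(x),\mathrm{t}(x)$; $S(a,b)=\{x:\mathrm{s}(x)=a,\mathrm{t}(x)=b\}$. $\mathrm{U_{mon}}(S)$ is the monoid presented by generators $\varepsilon_S(x)$ ($x\in S$) and relations $\varepsilon_S(e)=1$ ($e\in\mathrm{Id}\,S$), $\varepsilon_S(x)\varepsilon_S(y)=\varepsilon_S(xy)$ whenever $xy$ is defined. *)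

From Stdlib Require Import List.
Import ListNotations.



(* An arrow-only category: a set of arrows with source/target identity maps
   and a partial (associative) multiplication; x*y is defined iff t(x) = s(y)
   (diagrammatic order, x : s(x) -> t(x)). *)
Record Cat := {
  arr :> Type;
  src : arr -> arr;
  tgt : arr -> arr;
  comp : arr -> arr -> option arr;
  comp_defined : forall x y, (exists z, comp x y = Some z) <-> tgt x = src y;
  src_src : forall x, src (src x) = src x;
  tgt_src : forall x, tgt (src x) = src x;
  src_tgt : forall x, src (tgt x) = tgt x;
  tgt_tgt : forall x, tgt (tgt x) = tgt x;
  comp_src_l : forall x, comp (src x) x = Some x;
  comp_tgt_r : forall x, comp x (tgt x) = Some x;
  src_comp : forall x y z, comp x y = Some z -> src z = src x;
  tgt_comp : forall x y z, comp x y = Some z -> tgt z = tgt y;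
  comp_assoc : forall x y z xy yz, comp x y = Some xy -> comp y z = Some yz ->
                 comp xy z = comp x yz
}.

Definition is_id (S : Cat) (e : S) : Prop := src S e = e /\ tgt S e = e.

Definition hom (S : Cat) (a b : S) (x : S) : Prop := src S x = a /\ tgt S x = b.

(* U_mon(S) is the free monoid on the arrows (words = lists) modulo the
   congruence generated by  eps(e) = 1 (e identity)  and
   eps(x) eps(y) = eps(xy) (xy defined). *)
Inductive umon_eq (S : Cat) : list (arr S) -> list (arr S) -> Prop :=
| ue_id : forall e : arr S, is_id S e -> umon_eq S [e] []
| ue_comp : forall x y z : arr S, comp S x y = Some z -> umon_eq S [x; y] [z]
| ue_refl : forall w, umon_eq S w w
| ue_sym : forall w1 w2, umon_eq S w1 w2 -> umon_eq S w2 w1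
| ue_trans : forall w1 w2 w3, umon_eq S w1 w2 -> umon_eq S w2 w3 -> umon_eq S w1 w3
| ue_cat : forall u1 u2 v1 v2, umon_eq S u1 u2 -> umon_eq S v1 v2 ->
             umon_eq S (u1 ++ v1) (u2 ++ v2).

Definition eps_eq (S : Cat) (x y : S) : Prop := umon_eq S [x] [y].

From Stdlib Require Import List ClassicalDescription.
Import ListNotations.

(* U_mon(S) acts on reduced paths: sequences of non-identity arrows in which
   no two neighbours are composable, stored last arrow first.  An arrow acts by
   composing it with the last arrow of the path when possible (dropping the
   product if it is an identity) and by appending it otherwise.  The defining
   relations of U_mon(S) hold for this action, so the reduced path of a word
   is an invariant of its class; the one-letter word [x] reduces to [] if x is
   an identity and to [x] otherwise. *)

Section ReducedPaths.
Variable S : Cat.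

Lemma comp_tgt_src (x y z : S) : comp S x y = Some z -> tgt S x = src S y.
Proof. intro H. apply (comp_defined S). eauto. Qed.

Lemma comp_None (x y : S) : comp S x y = None <-> tgt S x <> src S y.
Proof.
  split.
  - intros H E. apply (comp_defined S) in E as [z Hz]. congruence.
  - intro H. destruct (comp S x y) eqn:E; auto.
    exfalso. exact (H (comp_tgt_src _ _ _ E)).
Qed.

Lemma comp_id_l (e y z : S) : is_id S e -> comp S e y = Some z -> z = y.
Proof.
  intros [_ He] H. pose proof (comp_tgt_src _ _ _ H) as E.
  rewrite He in E. subst e. rewrite comp_src_l in H. congruence.
Qed.

Lemma comp_id_r (x e z : S) : is_id S e -> comp S x e = Some z -> z = x.
Proof.
  intros [He _] H. pose proof (comp_tgt_src _ _ _ H) as E.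
  rewrite He in E. subst e. rewrite comp_tgt_r in H. congruence.
Qed.

Definition push (v : S) (r : list (arr S)) : list (arr S) :=
  if excluded_middle_informative (is_id S v) then r else v :: r.

Lemma push_id (e : S) r : is_id S e -> push e r = r.
Proof. unfold push. destruct (excluded_middle_informative (is_id S e)); tauto. Qed.

Lemma push_nid (v : S) r : ~ is_id S v -> push v r = v :: r.
Proof. unfold push. destruct (excluded_middle_informative (is_id S v)); tauto. Qed.

Definition stuck (r : list (arr S)) (x : S) : Prop :=
  match r with [] => True | u :: _ => comp S u x = None end.

Lemma stuck_src (r : list (arr S)) (x y : S) :
  src S x = src S y -> stuck r x -> stuck r y.
Proof.
  destruct r as [|u r]; simpl; auto.
  intros E H. apply comp_None. apply comp_None in H. congruence.
Qed.

Fixpoint reduced (s : list (arr S)) : Prop :=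
  match s with
  | [] => True
  | w :: r => ~ is_id S w /\ stuck r w /\ reduced r
  end.

Lemma push_reduced (v : S) r : stuck r v -> reduced r -> reduced (push v r).
Proof.
  intros Hv Hr. unfold push.
  destruct (excluded_middle_informative (is_id S v)); simpl; auto.
Qed.

Definition rmul (s : list (arr S)) (x : S) : list (arr S) :=
  match s with
  | w :: r => match comp S w x with
              | Some v => push v r
              | None => push x s
              end
  | [] => push x []
  end.

Lemma rmul_stuck s (x : S) : stuck s x -> rmul s x = push x s.
Proof. destruct s as [|w r]; simpl; auto. intros ->. reflexivity. Qed.

Lemma rmul_comp (w x v : S) r : comp S w x = Some v -> rmul (w :: r) x = push v r.
Proof. simpl. intros ->. reflexivity. Qed.

Lemma rmul_reduced s (x : S) : reduced s -> reduced (rmul s x).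
Proof.
  intro Hs. destruct s as [|w r]; simpl.
  - apply push_reduced; simpl; auto.
  - destruct (comp S w x) as [v|] eqn:Hwx.
    + destruct Hs as [_ [Hr Hrr]]. apply push_reduced; auto.
      apply (stuck_src r w); auto. symmetry. exact (src_comp S _ _ _ Hwx).
    + apply push_reduced; simpl; auto.
Qed.

(* Composing with an identity e either returns the last arrow unchanged or is
   undefined, in which case e is appended and then dropped. *)
Lemma rmul_id s (e : S) : reduced s -> is_id S e -> rmul s e = s.
Proof.
  intros Hs He. destruct s as [|w r]; simpl.
  - apply push_id, He.
  - destruct (comp S w e) as [v|] eqn:Hwe.
    + rewrite (comp_id_r _ _ _ He Hwe). apply push_nid, Hs.
    + apply push_id, He.
Qed.

Lemma rmul_comp_nid s (x y z : S) :
  reduced s -> ~ is_id S x -> ~ is_id S y -> comp S x y = Some z ->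
  rmul (rmul s x) y = rmul s z.
Proof.
  intros Hs Hx Hy Hxy.
  assert (Hsz : src S z = src S x) by exact (src_comp S _ _ _ Hxy).
  destruct s as [|w r].
  - simpl. rewrite push_nid by exact Hx. simpl. rewrite Hxy. reflexivity.
  - destruct (comp S w x) as [v|] eqn:Hwx.
    + assert (Hvy : comp S v y = comp S w z) by exact (comp_assoc S _ _ _ _ _ Hwx Hxy).
      rewrite (rmul_comp _ _ _ _ Hwx). simpl. rewrite <- Hvy.
      assert (Hvy_src : tgt S v = src S y).
      { rewrite (tgt_comp S _ _ _ Hwx). exact (comp_tgt_src _ _ _ Hxy). }
      destruct (excluded_middle_informative (is_id S v)) as [Hv|Hv].
      * (* v = wx is an identity, so w(xy) = y and y is stuck where w was *)
        assert (Hv_y : v = src S y) by (destruct Hv as [_ Hv]; congruence).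
        rewrite push_id by exact Hv. rewrite Hv_y, comp_src_l.
        destruct Hs as [_ [Hr _]]. apply rmul_stuck.
        apply (stuck_src r w); auto.
        rewrite <- (src_comp S _ _ _ Hwx), Hv_y, src_src. reflexivity.
      * rewrite push_nid by exact Hv. simpl.
        destruct (comp S v y) as [u|] eqn:Hu; auto.
        exfalso. apply comp_None in Hu. exact (Hu Hvy_src).
    + rewrite (rmul_stuck (w :: r) x) by exact Hwx.
      rewrite push_nid by exact Hx. rewrite (rmul_comp _ _ _ _ Hxy).
      rewrite rmul_stuck; auto. apply (stuck_src (w :: r) x); auto.
Qed.

Lemma rmul_comp_assoc s (x y z : S) :
  reduced s -> comp S x y = Some z -> rmul (rmul s x) y = rmul s z.
Proof.
  intros Hs Hxy.
  destruct (excluded_middle_informative (is_id S x)) as [Hx|Hx].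
  { rewrite (comp_id_l _ _ _ Hx Hxy), (rmul_id s x); auto. }
  destruct (excluded_middle_informative (is_id S y)) as [Hy|Hy].
  { rewrite (comp_id_r _ _ _ Hy Hxy), rmul_id; auto. apply rmul_reduced, Hs. }
  apply rmul_comp_nid; auto.
Qed.

Definition rmuls (s w : list (arr S)) : list (arr S) := fold_left rmul w s.

Lemma rmuls_reduced w s : reduced s -> reduced (rmuls s w).
Proof.
  revert s. induction w as [|x w IH]; simpl; auto.
  intros s Hs. apply IH, rmul_reduced, Hs.
Qed.

Lemma umon_eq_rmuls w1 w2 :
  umon_eq S w1 w2 -> forall s, reduced s -> rmuls s w1 = rmuls s w2.
Proof.
  induction 1 as [e He|x y z Hxy|w|w1 w2 _ IH|w1 w2 w3 _ IH12 _ IH23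
                 |u1 u2 v1 v2 _ IHu _ IHv]; intros s Hs; simpl.
  - apply rmul_id; auto.
  - apply rmul_comp_assoc; auto.
  - reflexivity.
  - symmetry. auto.
  - rewrite IH12; auto.
  - unfold rmuls. rewrite !fold_left_app. fold (rmuls s u1) (rmuls s u2).
    rewrite IHu; auto. apply IHv, rmuls_reduced, Hs.
Qed.

Lemma eps_eq_push (x y : S) : eps_eq S x y -> push x [] = push y [].
Proof. intro H. exact (umon_eq_rmuls _ _ H [] I). Qed.

Lemma push_nil_inj (x y : S) :
  push x [] = push y [] -> x = y \/ (is_id S x /\ is_id S y).
Proof.
  unfold push.
  destruct (excluded_middle_informative (is_id S x)),
           (excluded_middle_informative (is_id S y)); intro H;
    try discriminate; auto.
  left. congruence.
Qed.

Lemma eps_eq_id (e f : S) : is_id S e -> is_id S f -> eps_eq S e f.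
Proof.
  intros He Hf. eapply ue_trans; [apply ue_id, He | apply ue_sym, ue_id, Hf].
Qed.

End ReducedPaths.

Theorem lemma3p10 (S : Cat) :
  (forall x y : arr S, eps_eq S x y <-> (x = y \/ (is_id S x /\ is_id S y))) /\
  (forall a b x y : arr S, hom S a b x -> hom S a b y -> eps_eq S x y -> x = y).
Proof.
  assert (Heps : forall x y : arr S,
             eps_eq S x y <-> (x = y \/ (is_id S x /\ is_id S y))).
  { intros x y. split.
    - intro H. apply push_nil_inj, eps_eq_push, H.
    - intros [<- | [Hx Hy]]; [apply ue_refl | apply eps_eq_id; auto]. }
  split; auto.
  intros a b x y [Hxa _] [Hya _] H.
  destruct (proj1 (Heps x y) H) as [| [[Hx _] [Hy _]]]; congruence.
Qed.
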